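(* Let $X$ be a Tychonoff space and let $cX$, $dX$ be compactifications of $X$ with $dX\preceq cX$, witnessed by a continuous map $\varphi: cX\to dX$. Suppose $X$ is an $F_{\sigma\delta}$ subset of $cX$ and that the family $\mathcal F(cX,dX)$ is at most countable. Then $X$ is an $F_{\sigma\delta}$ subset of $dX$.
   Context: A compactification of $X$ is a pair $(cX,\varphi_c)$ with $cX$ compact Hausdorff and $\varphi_c$ a homeomorphic embedding of $X$ onto a dense subspace of $cX$; we identify $X$ with its image in $cX$ (and in $dX$). We write $dX\preceq cX$ if there exists a continuous map $\varphi:cX\to dX$ with $\varphi_d=\varphi\circ\varphi_c$. For such $\varphi$, $\mathcal F(cX,dX):=\{\varphi^{-1}(x) : x\in dX,\ \varphi^{-1}(x)\text{ is not a singleton}\}$. An $F_{\sigma\delta}$ set is a countable intersection of countable unions of closed sets. *)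

From HB Require Import structures.
From mathcomp Require Import all_boot all_order all_algebra.
From mathcomp Require Import all_classical all_reals all_analysis.
Set Implicit Arguments. Unset Strict Implicit. Unset Printing Implicit Defensive.
Import Order.TTheory GRing.Theory Num.Theory.
Local Open Scope classical_set_scope.

Definition tychonoff_space (X : topologicalType) : Prop :=
  completely_regular_space X /\ accessible_space X.

Definition embedding (X Y : topologicalType) (f : X -> Y) : Prop :=
  [/\ continuous f, injective f &
      forall U : set X, open U -> exists V : set Y, open V /\ f @^-1` V = U].

Definition compactification (X cX : topologicalType) (fc : X -> cX) : Prop :=
  [/\ compact [set: cX], hausdorff_space cX, embedding fc & dense (range fc)].

Definition Fsigmadelta (T : topologicalType) (A : set T) : Prop :=
  exists F : nat -> nat -> set T,
    (forall n m, closed (F n m)) /\ A = \bigcap_n \bigcup_m F n m.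

Definition nontrivial_fibres (cX dX : topologicalType) (phi : cX -> dX)
  : set (set cX) :=
  [set phi @^-1` [set y] | y in
     [set y : dX | ~ exists x : cX, phi @^-1` [set y] = [set x]]].

(* X = \bigcap_n S_n in cX with every S_n an F_sigma set.  A non-singleton fibre
   K of phi is compact and misses X (the fibre over a point of X is a single
   point of X), and compactness of K yields an F_sigma set S_K containing X and
   missing K.  As phi is a closed map, it sends F_sigma sets to F_sigma sets,
   and phi(X) = \bigcap_n phi(S_n) `&` \bigcap_K phi(S_K): a point with fibre
   {p} lies in every phi(S_n) only if p lies in X, and a point with a
   non-singleton fibre K is missed by phi(S_K).  Only countably many K occur. *)

From HB Require Import structures.
From mathcomp Require Import all_boot all_order all_algebra.
From mathcomp Require Import all_classical all_reals all_analysis.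
Set Implicit Arguments.
Unset Strict Implicit.
Unset Printing Implicit Defensive.
Local Open Scope classical_set_scope.

Definition Fsigma (T : topologicalType) (A : set T) : Prop :=
  exists C : nat -> set T, (forall m, closed (C m)) /\ A = \bigcup_m C m.

Section Fsigma_sets.
Variable T : topologicalType.
Implicit Types (A B Y K : set T).

Lemma FsigmaT : Fsigma [set: T].
Proof.
exists (fun=> setT); split => [_|]; first exact: closedT.
by rewrite bigcup_const //; exists 0%N.
Qed.

Lemma Fsigma_bigcup (I : countType) (D : set I) (C : I -> set T) :
  (forall i, D i -> closed (C i)) -> Fsigma (\bigcup_(i in D) C i).
Proof.
move=> clC; rewrite bigcup_mkcond.
exists (fun j => if unpickle j is Some i then
                 (if i \in D then C i else set0) else set0); split.
  move=> j; case: unpickle => [i|]; last exact: closed0.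
  by case: ifPn => [/set_mem/clC|_]; last exact: closed0.
apply/seteqP; split=> x [i _ Cix].
  by exists (pickle i) => //; rewrite pickleK.
by case: unpickle Cix => // j Cjx; exists j.
Qed.

Lemma Fsigmadelta_bigcap_nat (S : nat -> set T) :
  (forall n, Fsigma (S n)) -> Fsigmadelta (\bigcap_n S n).
Proof.
move=> /choice[C /all_and2[clC SE]]; exists C; split => //.
by congr (\bigcap_n _); apply: funext => n; rewrite SE.
Qed.

Lemma Fsigmadelta_bigcap (I : Type) (D : set I) (S : I -> set T) :
  countable D -> (forall i, D i -> Fsigma (S i)) ->
  Fsigmadelta (\bigcap_(i in D) S i).
Proof.
move=> /countable_injP[f finj] FS.
pose fibre n := [set i | D i /\ f i = n].
have -> : \bigcap_(i in D) S i = \bigcap_n \bigcap_(i in fibre n) S i.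
  apply/seteqP; split=> [x DSx n _ i [Di _]|x Sx i Di]; first exact: DSx.
  exact: (Sx (f i)).
apply: Fsigmadelta_bigcap_nat => n.
have [[i [Di <-]]|nofib] := pselect (exists i, D i /\ f i = n).
  have -> : fibre (f i) = [set i].
    apply/seteqP; split=> [j [Dj fji]|j ->]; last by [].
    exact: finj (mem_set Dj) (mem_set Di) fji.
  by rewrite bigcap_set1; exact: FS.
have -> : fibre n = set0.
  by apply/seteqP; split=> // j [Dj fj]; apply: nofib; exists j; rewrite fj.
by rewrite bigcap_set0; exact: FsigmaT.
Qed.

Lemma FsigmadeltaI A B :
  Fsigmadelta A -> Fsigmadelta B -> Fsigmadelta (A `&` B).
Proof.
move=> [FA [clFA ->]] [FB [clFB ->]].
exists (fun n => if odd n then FA n./2 else FB n./2); split.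
  by move=> n m; case: odd; [exact: clFA|exact: clFB].
apply/seteqP; split=> [x [FAx FBx] n _|x Fx].
  by case: odd; [exact: FAx|exact: FBx].
split=> n _.
  by have := Fx n.*2.+1 I; rewrite /= odd_double uphalf_double.
by have := Fx n.*2 I; rewrite odd_double doubleK.
Qed.

Lemma compact_bigcap_closed_finite K (G : nat -> set T) :
  compact K -> (forall n, closed (G n)) -> K `&` \bigcap_n G n = set0 ->
  exists N, K `&` \bigcap_(n < N) G n = set0.
Proof.
move=> cK clG KG0.
have KnG x : K x -> exists n, ~ G n x.
  move=> Kx; apply: contrapT => /forallNP nG.
  suff : (K `&` \bigcap_n G n) x by rewrite KG0.
  by split=> // n _; exact: contrapT.
have := (compact_near_coveringP K).1 cK nat \oo
  (fun N x => exists2 n, (n < N)%N & ~ G n x) _.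
case.
  move=> x /KnG[n nGx]; exists (~` G n, [set i | (n < i)%N]) => /=.
    split; last by exists n.+1.
    by apply: open_nbhs_nbhs; split => //; exact: closed_openC.
  by move=> [x' i] /= [? ?]; exists n.
move=> N _ KP; exists N; apply/seteqP; split=> // x [Kx GNx].
by have [n nN] := KP N (leqnn N) x Kx; apply; exact: GNx.
Qed.

Lemma Fsigmadelta_compact_separation Y K :
  Fsigmadelta Y -> compact K -> K `&` Y = set0 ->
  exists S, [/\ Fsigma S, Y `<=` S & K `&` S = set0].
Proof.
move=> [F [clF ->]] cK KY0.
pose meet (s : seq nat) := \bigcap_(n < size s) F n (nth 0%N s n).
exists (\bigcup_(s in [set s | K `&` meet s = set0]) meet s); split.
- by apply: Fsigma_bigcup => s _; apply: closed_bigI => n _; exact: clF.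
- move=> p Yp.
  have /choice[sg Fsg] : forall n, exists m, F n m p.
    by move=> n; have [m _] := Yp n I; exists m.
  (* The meet of the F n (sg n) misses K, so by compactness a finite one does. *)
  have KFsg0 : K `&` \bigcap_n F n (sg n) = set0.
    by apply: subsetI_eq0 KY0 => // x Fx n _; exists (sg n) => //; exact: Fx.
  have [N KN0] := compact_bigcap_closed_finite cK (fun n => clF n (sg n)) KFsg0.
  have meetE : meet (mkseq sg N) = \bigcap_(n < N) F n (sg n).
    apply/seteqP; rewrite /meet size_mkseq.
    by split=> x Fx n nN; have := Fx n nN; rewrite nth_mkseq.
  by exists (mkseq sg N); rewrite /= meetE // => n _.
- apply/seteqP; split=> // x [Kx [s Ks sx]].
  by have : (K `&` meet s) x by []; rewrite Ks.
Qed.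
End Fsigma_sets.

Section Continuous_images.
Variables (T U : topologicalType) (f : T -> U).
Hypotheses (cT : compact [set: T]) (hU : hausdorff_space U) (cf : continuous f).

Lemma closed_image_compact A : closed A -> closed (f @` A).
Proof.
move=> clA; apply: compact_closed => //.
apply: continuous_compact; first exact: continuous_subspaceT.
exact: subclosed_compact clA cT (@subsetT _ A).
Qed.

Lemma Fsigma_image A : Fsigma A -> Fsigma (f @` A).
Proof.
move=> [C [clC ->]]; exists (fun m => f @` C m); split.
  by move=> m; exact: closed_image_compact.
by rewrite image_bigcup.
Qed.
End Continuous_images.

Lemma embedding_fibre_set1 (X cX dX : topologicalType)
    (fc : X -> cX) (fd : X -> dX) (phi : cX -> dX) :
  hausdorff_space cX -> continuous fc -> dense (range fc) -> embedding fd ->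
  continuous phi -> fd = phi \o fc ->
  forall x, phi @^-1` [set fd x] = [set fc x].
Proof.
move=> hcX cfc dfc [_ _ fd_trace] cphi efd x.
apply/seteqP; split=> [p /= phip|_ ->]; last by rewrite /= efd.
apply: hcX => A B; rewrite nbhsE => -[A' [oA' A'p] A'A].
move=> /(cfc x); rewrite nbhsE => -[U [oU Ux] UB].
have [V [oV VU]] := fd_trace U oU.
have [w [[A'w Vw] [z _ zw]]] : (A' `&` phi @^-1` V) `&` range fc !=set0.
  apply: dfc; last by apply: openI => //; exact: open_comp.
  by exists p; split => //=; rewrite phip; move: Ux; rewrite -VU.
subst w; exists (fc z); split; first exact: A'A.
by apply: UB; rewrite -VU /= efd.
Qed.

Lemma image_bigcap_nontrivial_fibres (T U : topologicalType) (phi : T -> U)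
    (S : nat -> set T) (SK : set T -> set T) :
  (forall K, nontrivial_fibres phi K ->
    \bigcap_n S n `<=` SK K /\ K `&` SK K = set0) ->
  phi @` (\bigcap_n S n) =
    (\bigcap_n phi @` S n) `&` \bigcap_(K in nontrivial_fibres phi) phi @` SK K.
Proof.
move=> sepK; apply/seteqP; split=> [_ [p Sp <-]|y [Sy SKy]].
  split=> [n _|K /sepK[SSK _]]; exists p => //; [exact: Sp|exact: SSK].
have [[p fibre_y]|nontriv] := pselect (exists p, phi @^-1` [set y] = [set p]).
  have phip : phi p = y by have : [set p] p by []; rewrite -fibre_y.
  exists p => // n _; have [q Sq phiq] := Sy n I.
  by have : (phi @^-1` [set y]) q by []; rewrite fibre_y /= => <-.
pose K := phi @^-1` [set y].
have FK : nontrivial_fibres phi K by exists y.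
have [q SKq phiq] := SKy K FK.
by have : (K `&` SK K) q by []; rewrite (sepK K FK).2.
Qed.

Theorem corollary3p4 (X cX dX : topologicalType) (fc : X -> cX) (fd : X -> dX)
  (phi : cX -> dX) :
  tychonoff_space X ->
  compactification fc -> compactification fd ->
  continuous phi -> fd = phi \o fc ->
  Fsigmadelta (range fc) ->
  countable (nontrivial_fibres phi) ->
  Fsigmadelta (range fd).
Proof.
(* X is Tychonoff anyway, being a subspace of the compact Hausdorff space cX. *)
move=> _ [cXc cXh [cfc _ _] dfc] [_ dXh emb_fd _] cphi efd Yfsd cntF.
have fibre_fd := embedding_fibre_set1 cXh cfc dfc emb_fd cphi efd.
have sep K : nontrivial_fibres phi K ->
    exists S, [/\ Fsigma S, range fc `<=` S & K `&` S = set0].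
  case=> y nsy <-; apply: Fsigmadelta_compact_separation Yfsd _ _.
    apply: subclosed_compact cXc (@subsetT _ _).
    apply: preimage_closed => //.
    exact/accessible_closed_set1/hausdorff_accessible.
  apply/seteqP; split=> // p [/= phip [x _ xp]]; apply: nsy; exists (fc x).
  by rewrite -phip -xp -fibre_fd efd.
have /choice[SK HSK] : forall K, exists S, nontrivial_fibres phi K ->
    [/\ Fsigma S, range fc `<=` S & K `&` S = set0].
  move=> K; have [/sep[S ?]|nFK] := pselect (nontrivial_fibres phi K).
    by exists S.
  by exists set0.
have [F [clF Yeq]] := Yfsd.
have -> : range fd = phi @` range fc by rewrite efd image_comp.
rewrite Yeq (image_bigcap_nontrivial_fibres (SK := SK)).
  apply: FsigmadeltaI; apply: Fsigmadelta_bigcap => //.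
    move=> n _; apply: Fsigma_image => //; exists (F n); split => //.
  by move=> K /HSK[FS _ _]; exact: Fsigma_image.
by move=> K /HSK[_ YS KS]; rewrite -Yeq.
Qed.
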